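(* There is a constant $C>0$ with the following property. For every unital C*-algebra $A$, every $n\ge1$, every $\lambda>0$ and every $\lambda$-Lipschitz map $\alpha_0\colon S^{n-1}\to U(A)$ with $\operatorname{diam}\alpha_0(S^{n-1})\le\frac12$, there is an extension $\alpha\colon D^n\to U(A)$ of $\alpha_0$ which is $C\lambda$-Lipschitz. The constant $C$ depends neither on $A$ nor on $n$.
   Context: $U(A)=\{u\in A:u^*u=uu^*=1\}$, metrized by the norm of $A$; $S^{n-1}\subset D^n\subset\mathbb R^n$ carry the Euclidean metric. *)

From Stdlib Require Import Reals.
Open Scope R_scope.

Record Cplx := mkC { Cre : R; Cim : R }.
Definition C0 : Cplx := mkC 0 0.
Definition C1 : Cplx := mkC 1 0.
Definition Cadd (a b : Cplx) : Cplx := mkC (Cre a + Cre b) (Cim a + Cim b).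
Definition Cmul (a b : Cplx) : Cplx :=
  mkC (Cre a * Cre b - Cim a * Cim b) (Cre a * Cim b + Cim a * Cre b).
Definition Cconj (a : Cplx) : Cplx := mkC (Cre a) (- Cim a).
Definition Cmod (a : Cplx) : R := sqrt (Cre a ^ 2 + Cim a ^ 2).

Record CStarAlg := {
  car :> Type;
  cadd : car -> car -> car;
  czero : car;
  copp : car -> car;
  cscal : Cplx -> car -> car;
  cmul : car -> car -> car;
  cone : car;
  cstar : car -> car;
  cnorm : car -> R;
  cadd_assoc : forall x y z, cadd x (cadd y z) = cadd (cadd x y) z;
  cadd_comm : forall x y, cadd x y = cadd y x;
  cadd_0 : forall x, cadd czero x = x;
  cadd_opp : forall x, cadd x (copp x) = czero;
  cscal_addr : forall a x y, cscal a (cadd x y) = cadd (cscal a x) (cscal a y);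
  cscal_addl : forall a b x, cscal (Cadd a b) x = cadd (cscal a x) (cscal b x);
  cscal_mul : forall a b x, cscal (Cmul a b) x = cscal a (cscal b x);
  cscal_1 : forall x, cscal C1 x = x;
  cmul_assoc : forall x y z, cmul x (cmul y z) = cmul (cmul x y) z;
  cmul_addl : forall x y z, cmul (cadd x y) z = cadd (cmul x z) (cmul y z);
  cmul_addr : forall x y z, cmul x (cadd y z) = cadd (cmul x y) (cmul x z);
  cmul_scall : forall a x y, cmul (cscal a x) y = cscal a (cmul x y);
  cmul_scalr : forall a x y, cmul x (cscal a y) = cscal a (cmul x y);
  cmul_1l : forall x, cmul cone x = x;
  cmul_1r : forall x, cmul x cone = x;
  cnorm_eq0 : forall x, cnorm x = 0 -> x = czero;
  cnorm_scal : forall a x, cnorm (cscal a x) = Cmod a * cnorm x;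
  cnorm_triangle : forall x y, cnorm (cadd x y) <= cnorm x + cnorm y;
  cnorm_submult : forall x y, cnorm (cmul x y) <= cnorm x * cnorm y;
  ccomplete : forall u : nat -> car,
    (forall eps, 0 < eps -> exists N, forall m k, (N <= m)%nat -> (N <= k)%nat ->
        cnorm (cadd (u m) (copp (u k))) < eps) ->
    exists l, forall eps, 0 < eps -> exists N, forall m, (N <= m)%nat ->
        cnorm (cadd (u m) (copp l)) < eps;
  cstar_invol : forall x, cstar (cstar x) = x;
  cstar_add : forall x y, cstar (cadd x y) = cadd (cstar x) (cstar y);
  cstar_scal : forall a x, cstar (cscal a x) = cscal (Cconj a) (cstar x);
  cstar_mul : forall x y, cstar (cmul x y) = cmul (cstar y) (cstar x);
  cstar_identity : forall x, cnorm (cmul (cstar x) x) = cnorm x ^ 2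
}.

Definition cdist (A : CStarAlg) (x y : A) : R := cnorm A (cadd A x (copp A y)).

Definition unitary (A : CStarAlg) (u : A) : Prop :=
  cmul A (cstar A u) u = cone A /\ cmul A u (cstar A u) = cone A.

(** * Euclidean space R^n: points are x : nat -> R, only coordinates
    0..n-1 are used. *)
Fixpoint sumsq (n : nat) (x : nat -> R) : R :=
  match n with
  | O => 0
  | S m => sumsq m x + x m ^ 2
  end.

Definition edist (n : nat) (x y : nat -> R) : R :=
  sqrt (sumsq n (fun i => x i - y i)).

Definition in_sphere (n : nat) (x : nat -> R) : Prop := sumsq n x = 1.
Definition in_disk (n : nat) (x : nat -> R) : Prop := sumsq n x <= 1.

From Stdlib Require Import Reals Lra Lia Psatz ClassicalEpsilon FunctionalExtensionality.
Open Scope R_scope.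

(* Multiplying by u0^* with u0 = alpha0(e0) reduces to maps with values within 1/2 of
   the unit. There the inverse Cayley transform w |-> (w - 1)(1 + w)^-1 is 8/9-Lipschitz
   onto skew-adjoint elements of norm at most 1/3, where the Cayley transform
   a |-> (1 + a)(1 - a)^-1 is 9/2-Lipschitz back to unitaries (the inverses exist by the
   Neumann series). Skew-adjoint elements form a real vector space, so the transformed map
   k extends radially as y |-> |y| k(y/|y|), with Lipschitz constant 4/3 lam + 2 * 8/9 lam
   since |k| <= 4/3 lam; transforming back gives 9/2 * 28/9 lam = 14 lam. *)

(** * Euclidean space *)

Fixpoint dot (n : nat) (x y : nat -> R) : R :=
  match n with O => 0 | S m => dot m x y + x m * y m end.

Definition enorm (n : nat) (y : nat -> R) : R := sqrt (sumsq n y).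

Lemma sumsq_ge0 n x : 0 <= sumsq n x.
Proof. induction n; cbn [sumsq dot]; nra. Qed.

Lemma sumsq_ext n f g : (forall i, f i ^ 2 = g i ^ 2) -> sumsq n f = sumsq n g.
Proof. intro H. induction n; cbn [sumsq dot]; [reflexivity | rewrite IHn, H; reflexivity]. Qed.

Lemma sumsq_scale n c x : sumsq n (fun i => c * x i) = c ^ 2 * sumsq n x.
Proof. induction n; cbn [sumsq dot]; [ring | rewrite IHn; ring]. Qed.

Lemma sumsq_lin n a b u v :
  sumsq n (fun i => a * u i + b * v i)
  = a ^ 2 * sumsq n u + 2 * a * b * dot n u v + b ^ 2 * sumsq n v.
Proof. induction n; cbn [sumsq dot]; [ring | rewrite IHn; ring]. Qed.

Lemma dot_sumsq0 n u v : sumsq n v = 0 -> dot n u v = 0.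
Proof.
  induction n as [|n IHn]; cbn [sumsq dot]; intro Hv; [reflexivity|].
  pose proof (sumsq_ge0 n v).
  assert (v n = 0) as -> by nra. rewrite IHn by nra. ring.
Qed.

Lemma cauchy_schwarz n u v : dot n u v ^ 2 <= sumsq n u * sumsq n v.
Proof.
  pose proof (sumsq_ge0 n u). pose proof (sumsq_ge0 n v).
  destruct (Req_dec (sumsq n v) 0) as [Hv | Hv].
  - rewrite (dot_sumsq0 n u v Hv), Hv. nra.
  - (* expand 0 <= |S_v u - D v|^2 = S_v (S_u S_v - D^2) *)
    pose proof (sumsq_ge0 n (fun i => sumsq n v * u i + - dot n u v * v i)) as Hq.
    rewrite sumsq_lin in Hq. nra.
Qed.

Lemma dot_le n u v : dot n u v <= enorm n u * enorm n v.
Proof.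
  pose proof (cauchy_schwarz n u v). unfold enorm.
  pose proof (sqrt_pos (sumsq n u)). pose proof (sqrt_pos (sumsq n v)).
  rewrite <- (sqrt_sqrt (sumsq n u)), <- (sqrt_sqrt (sumsq n v)) in H by apply sumsq_ge0.
  destruct (Rle_or_lt (dot n u v) (sqrt (sumsq n u) * sqrt (sumsq n v))); [assumption|].
  assert (0 <= sqrt (sumsq n u) * sqrt (sumsq n v)) by nra. nra.
Qed.

Lemma enorm_ge0 n y : 0 <= enorm n y.
Proof. apply sqrt_pos. Qed.

Lemma enorm_triangle n u v : enorm n (fun i => u i + v i) <= enorm n u + enorm n v.
Proof.
  pose proof (dot_le n u v). pose proof (enorm_ge0 n u). pose proof (enorm_ge0 n v).
  unfold enorm at 1. rewrite <- (sqrt_square (enorm n u + enorm n v)) by lra.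
  apply sqrt_le_1_alt.
  rewrite (sumsq_ext n _ (fun i => 1 * u i + 1 * v i)) by (intro; ring).
  rewrite sumsq_lin. unfold enorm in *.
  rewrite <- (sqrt_sqrt (sumsq n u)) at 1 by apply sumsq_ge0.
  rewrite <- (sqrt_sqrt (sumsq n v)) at 1 by apply sumsq_ge0.
  nra.
Qed.

Lemma edist_ge0 n x y : 0 <= edist n x y.
Proof. apply sqrt_pos. Qed.

Lemma edist_sym n x y : edist n x y = edist n y x.
Proof. unfold edist. f_equal. apply sumsq_ext. intro. ring. Qed.

Lemma edist_triangle n x y z : edist n x z <= edist n x y + edist n y z.
Proof.
  unfold edist. rewrite (sumsq_ext n _ (fun i => (x i - y i) + (y i - z i))) by (intro; ring).
  apply (enorm_triangle n (fun i => x i - y i) (fun i => y i - z i)).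
Qed.

Lemma edist_scale n c x y :
  edist n (fun i => c * x i) (fun i => c * y i) = Rabs c * edist n x y.
Proof.
  unfold edist. rewrite (sumsq_ext n _ (fun i => c * (x i - y i))) by (intro; ring).
  rewrite sumsq_scale, sqrt_mult by (apply pow2_ge_0 || apply sumsq_ge0).
  rewrite <- sqrt_Rsqr_abs. unfold Rsqr. f_equal. f_equal. ring.
Qed.

Lemma edist_origin n y : edist n y (fun _ => 0) = enorm n y.
Proof. unfold edist, enorm. f_equal. apply sumsq_ext. intro. ring. Qed.

Lemma enorm_lipschitz n y y' : Rabs (enorm n y - enorm n y') <= edist n y y'.
Proof.
  rewrite <- !edist_origin.
  pose proof (edist_triangle n y y' (fun _ => 0)).
  pose proof (edist_triangle n y' y (fun _ => 0)).
  rewrite (edist_sym n y' y) in *. apply Rabs_le. lra.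
Qed.

Lemma enorm_sphere n x : in_sphere n x -> enorm n x = 1.
Proof. intro H. unfold enorm. rewrite H. apply sqrt_1. Qed.

Lemma enorm_disk n y : in_disk n y -> enorm n y <= 1.
Proof. intro H. unfold enorm. rewrite <- sqrt_1. apply sqrt_le_1_alt, H. Qed.

(* Division by zero is 0 in Rocq, so [normalize n y] is the origin when [enorm n y = 0]. *)
Definition normalize (n : nat) (y : nat -> R) : nat -> R := fun i => y i / enorm n y.

Lemma normalize_sphere n y : enorm n y <> 0 -> in_sphere n (normalize n y).
Proof.
  intro H. unfold in_sphere, normalize.
  rewrite (sumsq_ext n _ (fun i => / enorm n y * y i)) by (intro; unfold Rdiv; ring).
  rewrite sumsq_scale. unfold enorm in *. rewrite <- (sqrt_sqrt (sumsq n y)) at 2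
    by apply sumsq_ge0.
  field. exact H.
Qed.

Lemma normalize_sphere_id n x : in_sphere n x -> normalize n x = x.
Proof.
  intro H. apply functional_extensionality. intro i.
  unfold normalize. rewrite enorm_sphere by exact H. field.
Qed.

Lemma enorm_normalize n y : enorm n y <> 0 -> (fun i => enorm n y * normalize n y i) = y.
Proof. intro H. apply functional_extensionality. intro i. unfold normalize. field. exact H. Qed.

Lemma normalize_lipschitz n y y' : enorm n y <> 0 -> enorm n y' <> 0 ->
  enorm n y' * edist n (normalize n y) (normalize n y') <= 2 * edist n y y'.
Proof.
  intros Hy Hy'. pose proof (enorm_ge0 n y'). pose proof (enorm_lipschitz n y y').
  rewrite <- (Rabs_pos_eq (enorm n y')) at 1 by assumption.
  rewrite <- edist_scale, (enorm_normalize n y' Hy').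
  assert (Hr : edist n (fun i => enorm n y' * normalize n y i)
                       (fun i => enorm n y * normalize n y i)
               = Rabs (enorm n y' - enorm n y)).
  { unfold edist.
    rewrite (sumsq_ext n _ (fun i => (enorm n y' - enorm n y) * normalize n y i))
      by (intro; ring).
    rewrite sumsq_scale, (normalize_sphere n y Hy), Rmult_1_r, <- sqrt_Rsqr_abs.
    unfold Rsqr. f_equal. ring. }
  rewrite (enorm_normalize n y Hy) in Hr.
  pose proof (edist_triangle n (fun i => enorm n y' * normalize n y i) y y').
  rewrite <- Rabs_Ropp in Hr. replace (- _) with (enorm n y - enorm n y') in Hr by ring.
  lra.
Qed.

Definition e0 : nat -> R := fun i => if Nat.eqb i 0 then 1 else 0.

Lemma e0_sphere n : (1 <= n)%nat -> in_sphere n e0.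
Proof.
  intro Hn. destruct n as [|n]; [lia|]. unfold in_sphere.
  induction n as [|n IHn]; cbn [sumsq]; unfold e0; simpl; [ring|].
  cbn [sumsq] in IHn. unfold e0 in IHn. simpl in IHn. rewrite IHn by lia. ring.
Qed.

Lemma sphere_diam n x y : in_sphere n x -> in_sphere n y -> edist n x y <= 2.
Proof.
  intros Hx Hy. pose proof (edist_triangle n x (fun _ => 0) y).
  rewrite edist_origin, (edist_sym n (fun _ => 0) y), edist_origin, !enorm_sphere in H
    by assumption.
  lra.
Qed.

Local Notation "x ⊕ y" := (cadd _ x y) (at level 50, left associativity).
Local Notation "⊖ x" := (copp _ x) (at level 35, right associativity).
Local Notation "x ⊖ y" := (cadd _ x (copp _ y)) (at level 50, left associativity).
Local Notation "x ⊗ y" := (cmul _ x y) (at level 40, left associativity).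
Local Notation "x ^*" := (cstar _ x) (at level 2, left associativity, format "x ^*").
Local Notation "N[ x ]" := (cnorm _ x) (at level 0, x at level 99, format "N[ x ]").

Definition rscale (A : CStarAlg) (c : R) (x : A) : A := cscal A (mkC c 0) x.
Local Notation "c • x" := (rscale _ c x) (at level 40, left associativity).

Definition invertible (A : CStarAlg) (x : A) : Prop :=
  exists y, x ⊗ y = cone A /\ y ⊗ x = cone A.

(* An arbitrary element when x is not invertible. *)
Definition inv (A : CStarAlg) (x : A) : A :=
  epsilon (inhabits (czero A)) (fun y => x ⊗ y = cone A /\ y ⊗ x = cone A).

Section Algebra.
Context {A : CStarAlg}.
Local Notation one := (cone A).
Local Notation zero := (czero A).
Implicit Types x y z a b u w : A.

Lemma addr0 x : x ⊕ zero = x.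
Proof. rewrite cadd_comm. apply cadd_0. Qed.

Lemma addNr x : ⊖ x ⊕ x = zero.
Proof. rewrite cadd_comm. apply cadd_opp. Qed.

Lemma addrK x y : x ⊕ y ⊖ y = x.
Proof. rewrite <- cadd_assoc, cadd_opp. apply addr0. Qed.

Lemma subrK x y : x ⊖ y ⊕ y = x.
Proof. rewrite <- cadd_assoc, addNr. apply addr0. Qed.

Lemma addKr x y : x ⊕ y ⊖ x = y.
Proof. rewrite (cadd_comm A x). apply addrK. Qed.

Lemma addIr x y z : x ⊕ z = y ⊕ z -> x = y.
Proof. intro H. rewrite <- (addrK x z), H. apply addrK. Qed.

Lemma addrI x y z : z ⊕ x = z ⊕ y -> x = y.
Proof. rewrite !(cadd_comm A z). apply addIr. Qed.

Lemma opp_unique x y : x ⊕ y = zero -> y = ⊖ x.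
Proof. intro H. apply (addIr _ _ x). rewrite addNr, cadd_comm. exact H. Qed.

Lemma opprK x : ⊖ ⊖ x = x.
Proof. symmetry. apply opp_unique, addNr. Qed.

Lemma oppr0 : ⊖ zero = zero.
Proof. symmetry. apply opp_unique, cadd_0. Qed.

Lemma opprD x y : ⊖ (x ⊕ y) = ⊖ x ⊕ ⊖ y.
Proof.
  symmetry. apply opp_unique.
  rewrite (cadd_comm A (⊖ x)), cadd_assoc, addrK. apply cadd_opp.
Qed.

Lemma opprB x y : ⊖ (x ⊖ y) = y ⊖ x.
Proof. rewrite opprD, opprK, cadd_comm. reflexivity. Qed.

Lemma subr0_eq x y : x ⊖ y = zero -> x = y.
Proof. intro H. rewrite <- (subrK x y), H. apply cadd_0. Qed.

Lemma subKr x y : x ⊖ (x ⊖ y) = y.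
Proof. rewrite opprB, cadd_comm. apply subrK. Qed.

Lemma subr_eq_swap x y z : x ⊖ y = z -> y = x ⊖ z.
Proof. intro H. rewrite <- H. symmetry. apply subKr. Qed.

Lemma addr_eq_swap x y z : x ⊕ y = z -> y = z ⊖ x.
Proof. intro H. rewrite <- H. symmetry. apply addKr. Qed.

Lemma subr_trans x y z : x ⊖ y ⊕ (y ⊖ z) = x ⊖ z.
Proof. rewrite cadd_assoc, subrK. reflexivity. Qed.

Lemma addrACA x y z w : x ⊕ y ⊕ (z ⊕ w) = x ⊕ z ⊕ (y ⊕ w).
Proof. rewrite <- !cadd_assoc, (cadd_assoc A y), (cadd_comm A y), <- cadd_assoc. reflexivity. Qed.

Lemma addrKA x y z : x ⊕ y ⊖ (x ⊕ z) = y ⊖ z.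
Proof. rewrite opprD, addrACA, cadd_opp. apply cadd_0. Qed.

Lemma addrKAr x y z : x ⊕ z ⊖ (y ⊕ z) = x ⊖ y.
Proof. rewrite (cadd_comm A x), (cadd_comm A y). apply addrKA. Qed.

Lemma subrBB x y z : x ⊖ y ⊖ (x ⊖ z) = z ⊖ y.
Proof. rewrite addrKA, opprK, cadd_comm. reflexivity. Qed.

Lemma subr_double x y : x ⊕ x ⊖ (y ⊕ y) = x ⊖ y ⊕ (x ⊖ y).
Proof. rewrite opprD. apply addrACA. Qed.

Lemma mul0r x : zero ⊗ x = zero.
Proof. apply (addrI _ _ (zero ⊗ x)). rewrite <- cmul_addl, cadd_0, addr0. reflexivity. Qed.

Lemma mulr0 x : x ⊗ zero = zero.
Proof. apply (addrI _ _ (x ⊗ zero)). rewrite <- cmul_addr, cadd_0, addr0. reflexivity. Qed.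

Lemma mulNr x y : ⊖ x ⊗ y = ⊖ (x ⊗ y).
Proof. apply opp_unique. rewrite <- cmul_addl, cadd_opp. apply mul0r. Qed.

Lemma mulrN x y : x ⊗ ⊖ y = ⊖ (x ⊗ y).
Proof. apply opp_unique. rewrite <- cmul_addr, cadd_opp. apply mulr0. Qed.

Lemma mulrBl x y z : (x ⊖ y) ⊗ z = x ⊗ z ⊖ y ⊗ z.
Proof. rewrite cmul_addl, mulNr. reflexivity. Qed.

Lemma mulrBr x y z : z ⊗ (x ⊖ y) = z ⊗ x ⊖ z ⊗ y.
Proof. rewrite cmul_addr, mulrN. reflexivity. Qed.

Lemma star1 : one^* = one.
Proof.
  assert (H : (one ⊗ one^*)^* = one^*^*) by (rewrite cmul_1l; reflexivity).
  rewrite cstar_mul, !cstar_invol, cmul_1l in H. exact H.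
Qed.

Lemma star0 : zero^* = zero.
Proof. apply (addrI _ _ (zero^*)). rewrite <- cstar_add, cadd_0, addr0. reflexivity. Qed.

Lemma starN x : (⊖ x)^* = ⊖ x^*.
Proof. apply opp_unique. rewrite <- cstar_add, cadd_opp. apply star0. Qed.

End Algebra.

Section Norm.
Context {A : CStarAlg}.
Local Notation one := (cone A).
Local Notation zero := (czero A).
Implicit Types x y z a b u : A.

Lemma rscaleDl c d x : (c + d) • x = c • x ⊕ d • x.
Proof.
  unfold rscale. rewrite <- cscal_addl. f_equal. unfold Cadd. simpl. f_equal. ring.
Qed.

Lemma rscale_mul c d x : c • (d • x) = (c * d) • x.
Proof.
  unfold rscale. rewrite <- cscal_mul. f_equal. unfold Cmul. simpl. f_equal; ring.
Qed.

Lemma rscale1 x : 1 • x = x.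
Proof. apply cscal_1. Qed.

Lemma rscale_mull c x y : (c • x) ⊗ y = c • (x ⊗ y).
Proof. apply cmul_scall. Qed.

Lemma rscale_mulr c x y : x ⊗ (c • y) = c • (x ⊗ y).
Proof. apply cmul_scalr. Qed.

Lemma normr_rscale c x : N[c • x] = Rabs c * N[x].
Proof.
  unfold rscale. rewrite cnorm_scal. f_equal. unfold Cmod. simpl.
  rewrite <- sqrt_Rsqr_abs. unfold Rsqr. f_equal. ring.
Qed.

Lemma rscale0 x : 0 • x = zero.
Proof. apply cnorm_eq0. rewrite normr_rscale, Rabs_R0. ring. Qed.

Lemma rscaleN1 x : (-1) • x = ⊖ x.
Proof.
  apply opp_unique. rewrite <- (rscale1 x) at 1. rewrite <- rscaleDl.
  replace (1 + -1) with 0 by ring. apply rscale0.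
Qed.

Lemma rscaleN c x : c • ⊖ x = ⊖ (c • x).
Proof. rewrite <- (rscaleN1 x), <- (rscaleN1 (c • x)), !rscale_mul, Rmult_comm. reflexivity. Qed.

Lemma rscaleBr c x y : c • (x ⊖ y) = c • x ⊖ c • y.
Proof. unfold rscale at 1. rewrite cscal_addr. apply f_equal, rscaleN. Qed.

Lemma rscale_star c x : (c • x)^* = c • x^*.
Proof. unfold rscale. rewrite cstar_scal. unfold Cconj. simpl. rewrite Ropp_0. reflexivity. Qed.

Lemma rscale_split c d x y : c • x ⊖ d • y = (c - d) • x ⊕ d • (x ⊖ y).
Proof.
  rewrite rscaleBr, cadd_assoc, <- rscaleDl. replace (c - d + d) with c by ring.
  reflexivity.
Qed.

Lemma normr0 : N[zero] = 0.
Proof. rewrite <- (rscale0 zero), normr_rscale, Rabs_R0. ring. Qed.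

Lemma normrN x : N[⊖ x] = N[x].
Proof. rewrite <- rscaleN1, normr_rscale, Rabs_left by lra. ring. Qed.

Lemma normr_ge0 x : 0 <= N[x].
Proof. pose proof (cnorm_triangle A x (⊖ x)). rewrite cadd_opp, normr0, normrN in H. lra. Qed.

Lemma distrC x y : N[x ⊖ y] = N[y ⊖ x].
Proof. rewrite <- opprB, normrN. reflexivity. Qed.

Lemma dist_triangle x y z : N[x ⊖ z] <= N[x ⊖ y] + N[y ⊖ z].
Proof. rewrite <- (subr_trans x y z). apply cnorm_triangle. Qed.

Lemma normr_double x : N[x ⊕ x] <= 2 * N[x].
Proof. pose proof (cnorm_triangle A x x). lra. Qed.

Lemma normrM3 x y z : N[x ⊗ y ⊗ z] <= N[x] * N[y] * N[z].
Proof.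
  eapply Rle_trans; [apply cnorm_submult|].
  apply Rmult_le_compat_r; [apply normr_ge0 | apply cnorm_submult].
Qed.

Lemma normr1 : N[one] <= 1.
Proof.
  pose proof (cstar_identity A one) as H. rewrite star1, cmul_1l in H.
  pose proof (normr_ge0 one). nra.
Qed.

Lemma eq_of_dist_small x y : (forall eps, 0 < eps -> N[x ⊖ y] <= eps) -> x = y.
Proof.
  intro H. apply subr0_eq, cnorm_eq0. pose proof (normr_ge0 (x ⊖ y)).
  destruct (Rle_lt_or_eq_dec _ _ H0) as [Hlt | Heq]; [|auto].
  specialize (H (N[x ⊖ y] / 2) ltac:(lra)). lra.
Qed.

End Norm.

Section Unitary.
Context {A : CStarAlg}.
Local Notation one := (cone A).
Implicit Types x y u v : A.

Lemma norm_unitary u : unitary A u -> N[u] <= 1.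
Proof.
  intros [H _]. pose proof (cstar_identity A u) as E. rewrite H in E.
  pose proof normr1 (A := A). pose proof (normr_ge0 u). nra.
Qed.

Lemma unitary_star u : unitary A u -> unitary A u^*.
Proof. intros [H1 H2]. split; rewrite cstar_invol; assumption. Qed.

Lemma unitary_mul u v : unitary A u -> unitary A v -> unitary A (u ⊗ v).
Proof.
  intros [H1 H2] [H3 H4]. split; rewrite cstar_mul.
  - rewrite cmul_assoc, <- (cmul_assoc A v^*), H1, cmul_1r. exact H3.
  - rewrite cmul_assoc, <- (cmul_assoc A u), H4, cmul_1r. exact H2.
Qed.

Lemma unitary_dist_mull u x y : unitary A u -> N[u ⊗ x ⊖ u ⊗ y] <= N[x ⊖ y].
Proof.
  intro Hu. rewrite <- mulrBr. eapply Rle_trans; [apply cnorm_submult|].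
  pose proof (norm_unitary u Hu). pose proof (normr_ge0 (x ⊖ y)). nra.
Qed.

Lemma unitary_mulKV u x : unitary A u -> u ⊗ (u^* ⊗ x) = x.
Proof. intros [_ H]. rewrite cmul_assoc, H. apply cmul_1l. Qed.

End Unitary.

(** * Inverses and the Neumann series *)

Section Neumann.
Context {A : CStarAlg}.
Local Notation one := (cone A).
Local Notation zero := (czero A).
Implicit Types x y z a b : A.

Lemma inv_spec x : invertible A x -> x ⊗ inv A x = one /\ inv A x ⊗ x = one.
Proof. intro H. unfold inv. apply epsilon_spec, H. Qed.

Lemma inv_uniq l x r : l ⊗ x = one -> x ⊗ r = one -> l = r.
Proof. intros H1 H2. rewrite <- (cmul_1r A l), <- H2, cmul_assoc, H1. apply cmul_1l. Qed.

Lemma comm_inv b z : (one ⊕ b) ⊗ z = one -> z ⊗ (one ⊕ b) = one -> b ⊗ z = z ⊗ b.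
Proof.
  rewrite cmul_addl, cmul_1l, cmul_addr, cmul_1r. intros H1 H2.
  apply (addrI _ _ z). rewrite H1, H2. reflexivity.
Qed.

Lemma resolvent_eq p q x y :
  p ⊗ x = one -> y ⊗ q = one -> p ⊖ q = p ⊗ (y ⊖ x) ⊗ q.
Proof.
  intros H1 H2. rewrite mulrBr, mulrBl, <- !cmul_assoc, H2, cmul_assoc, H1, cmul_1r, cmul_1l.
  reflexivity.
Qed.

Lemma norm_left_inv_le z a : z ⊗ (one ⊖ a) = one -> N[z] * (1 - N[a]) <= 1.
Proof.
  rewrite mulrBr, cmul_1r. intro H.
  assert (Hz : z = one ⊕ z ⊗ a) by (rewrite <- H; symmetry; apply subrK).
  pose proof (cnorm_triangle A one (z ⊗ a)). pose proof (cnorm_submult A z a).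
  pose proof (normr1 (A := A)). rewrite <- Hz in *. lra.
Qed.

Fixpoint cpow a m : A := match m with O => one | S m => a ⊗ cpow a m end.

Fixpoint geom a m : A := match m with O => zero | S m => geom a m ⊕ cpow a m end.

Lemma cpow_comm a m : a ⊗ cpow a m = cpow a m ⊗ a.
Proof.
  induction m as [|m IHm]; simpl; [rewrite cmul_1l, cmul_1r; reflexivity|].
  rewrite <- cmul_assoc, <- IHm. reflexivity.
Qed.

Lemma norm_cpow a m : N[cpow a m] <= N[a] ^ m.
Proof.
  induction m as [|m IHm]; simpl; [apply normr1|].
  eapply Rle_trans; [apply cnorm_submult|].
  apply Rmult_le_compat_l; [apply normr_ge0 | exact IHm].
Qed.

Lemma geom_mull a m : (one ⊖ a) ⊗ geom a m = one ⊖ cpow a m.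
Proof.
  induction m as [|m IHm]; simpl; [rewrite mulr0; symmetry; apply cadd_opp|].
  rewrite cmul_addr, IHm, mulrBl, cmul_1l. apply subr_trans.
Qed.

Lemma geom_mulr a m : geom a m ⊗ (one ⊖ a) = one ⊖ cpow a m.
Proof.
  induction m as [|m IHm]; simpl; [rewrite mul0r; symmetry; apply cadd_opp|].
  rewrite cmul_addl, IHm, mulrBr, cmul_1r, <- cpow_comm. apply subr_trans.
Qed.

Lemma norm_geomB a j k : N[a] < 1 ->
  N[geom a (j + k) ⊖ geom a k] * (1 - N[a]) <= N[a] ^ k * (1 - N[a] ^ j).
Proof.
  intro Ha. pose proof (normr_ge0 a).
  induction j as [|j IHj]; simpl; [rewrite cadd_opp, normr0; lra|].
  rewrite <- cadd_assoc, (cadd_comm A (cpow a (j + k))), cadd_assoc.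
  pose proof (cnorm_triangle A (geom a (j + k) ⊖ geom a k) (cpow a (j + k))).
  pose proof (norm_cpow a (j + k)). rewrite pow_add in *.
  assert (0 <= N[a] ^ j * N[a] ^ k) by (apply Rmult_le_pos; apply pow_le; lra).
  nra.
Qed.

Lemma geom_cauchy a : N[a] < 1 -> forall eps, 0 < eps -> exists N, forall m k,
  (N <= m)%nat -> (N <= k)%nat -> N[geom a m ⊖ geom a k] < eps.
Proof.
  intros Ha eps Heps. pose proof (normr_ge0 a).
  destruct (pow_lt_1_zero (N[a]) ltac:(rewrite Rabs_pos_eq; lra) (eps * (1 - N[a])))
    as [N HN]; [nra|].
  assert (Hle : forall m k, (N <= k)%nat -> (k <= m)%nat -> N[geom a m ⊖ geom a k] < eps).
  { intros m k Hk Hkm. replace m with ((m - k) + k)%nat by lia.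
    pose proof (norm_geomB a (m - k) k Ha). specialize (HN k Hk).
    rewrite Rabs_pos_eq in HN by (apply pow_le; lra).
    pose proof (pow_le _ (m - k) H). pose proof (pow_le _ k H).
    apply (Rmult_lt_reg_r (1 - N[a])); nra. }
  exists N. intros m k Hm Hk. destruct (Nat.le_ge_cases k m).
  - apply Hle; assumption.
  - rewrite distrC. apply Hle; assumption.
Qed.

Lemma lipschitz_lim_eq (f : A -> A) c (s : nat -> A) l y : 0 <= c ->
  (forall x x', N[f x ⊖ f x'] <= c * N[x ⊖ x']) ->
  (forall eps, 0 < eps -> exists m, N[s m ⊖ l] < eps /\ N[f (s m) ⊖ y] < eps) ->
  f l = y.
Proof.
  intros Hc Hf Hs. apply eq_of_dist_small. intros eps Heps.
  destruct (Hs (eps / (c + 1))) as [m [H1 H2]]; [apply Rdiv_lt_0_compat; lra|].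
  pose proof (dist_triangle (f l) (f (s m)) y). specialize (Hf l (s m)).
  rewrite distrC in H1. pose proof (normr_ge0 (l ⊖ s m)).
  assert (c * N[l ⊖ s m] <= c * (eps / (c + 1))) by nra.
  assert (c * (eps / (c + 1)) + eps / (c + 1) = eps) by (field; lra).
  lra.
Qed.

Lemma invertible_one_sub a : N[a] < 1 -> invertible A (one ⊖ a).
Proof.
  intro Ha. pose proof (normr_ge0 a).
  destruct (ccomplete A (geom a) (geom_cauchy a Ha)) as [l Hl].
  assert (Happrox : forall eps, 0 < eps ->
            exists m, N[geom a m ⊖ l] < eps /\ N[cpow a m] < eps).
  { intros eps Heps. destruct (Hl eps Heps) as [N1 HN1].
    destruct (pow_lt_1_zero (N[a]) ltac:(rewrite Rabs_pos_eq; lra) eps Heps) as [N2 HN2].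
    exists (N1 + N2)%nat. split; [apply HN1; lia|].
    eapply Rle_lt_trans; [apply norm_cpow|].
    specialize (HN2 (N1 + N2)%nat ltac:(lia)). rewrite Rabs_pos_eq in HN2; [exact HN2|].
    apply pow_le. lra. }
  exists l. split.
  - apply (lipschitz_lim_eq (cmul A (one ⊖ a)) (N[one ⊖ a]) (geom a)).
    + apply normr_ge0.
    + intros x x'. rewrite <- mulrBr. apply cnorm_submult.
    + intros eps Heps. destruct (Happrox eps Heps) as [m [H1 H2]].
      exists m. rewrite geom_mull, addKr, normrN. auto.
  - apply (lipschitz_lim_eq (fun x => x ⊗ (one ⊖ a)) (N[one ⊖ a]) (geom a)).
    + apply normr_ge0.
    + intros x x'. rewrite <- mulrBl, Rmult_comm. apply cnorm_submult.
    + intros eps Heps. destruct (Happrox eps Heps) as [m [H1 H2]].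
      exists m. rewrite geom_mulr, addKr, normrN. auto.
Qed.

End Neumann.

(** * The Cayley transform *)

Definition cayley (A : CStarAlg) (a : A) : A := (cone A ⊕ a) ⊗ inv A (cone A ⊖ a).

Section Cayley.
Context {A : CStarAlg}.
Local Notation one := (cone A).
Implicit Types a b : A.

Lemma inv_one_sub a : N[a] <= 1/3 ->
  (one ⊖ a) ⊗ inv A (one ⊖ a) = one /\ inv A (one ⊖ a) ⊗ (one ⊖ a) = one /\
  N[inv A (one ⊖ a)] <= 3/2.
Proof.
  intro Ha. destruct (inv_spec _ (invertible_one_sub a ltac:(lra))) as [H1 H2].
  repeat split; [assumption | assumption|].
  pose proof (norm_left_inv_le _ _ H2). pose proof (normr_ge0 (inv A (one ⊖ a))). nra.
Qed.

Lemma cayleyE a : N[a] <= 1/3 ->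
  cayley A a = inv A (one ⊖ a) ⊕ inv A (one ⊖ a) ⊖ one.
Proof.
  intro Ha. destruct (inv_one_sub a Ha) as [H _]. unfold cayley.
  rewrite mulrBl, cmul_1l in H. apply subr_eq_swap in H.
  rewrite cmul_addl, cmul_1l, H, cadd_assoc. reflexivity.
Qed.

Lemma cayley_lipschitz a b : N[a] <= 1/3 -> N[b] <= 1/3 ->
  N[cayley A a ⊖ cayley A b] <= 9/2 * N[a ⊖ b].
Proof.
  intros Ha Hb. rewrite (cayleyE a Ha), (cayleyE b Hb), addrKAr, subr_double.
  destruct (inv_one_sub a Ha) as [_ [Ha2 Ha3]]. destruct (inv_one_sub b Hb) as [Hb1 [_ Hb3]].
  rewrite (resolvent_eq _ _ _ _ Ha2 Hb1), subrBB.
  eapply Rle_trans; [apply normr_double|].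
  eapply Rle_trans; [apply Rmult_le_compat_l; [lra | apply normrM3]|].
  pose proof (normr_ge0 (inv A (one ⊖ a))). pose proof (normr_ge0 (a ⊖ b)).
  assert (N[inv A (one ⊖ a)] * N[a ⊖ b] <= 3/2 * N[a ⊖ b]) by nra.
  assert (0 <= N[inv A (one ⊖ a)] * N[a ⊖ b]) by nra.
  nra.
Qed.

Lemma cayley_unitary a : N[a] <= 1/3 -> a^* = ⊖ a -> unitary A (cayley A a).
Proof.
  intros Ha Hskew. destruct (inv_one_sub a Ha) as [H1 [H2 _]].
  set (p := inv A (one ⊖ a)) in *. set (q := p^*).
  assert (Hm : (one ⊖ a)^* = one ⊕ a)
    by (rewrite cstar_add, star1, starN, Hskew, opprK; reflexivity).
  assert (Hp : (one ⊕ a)^* = one ⊖ a) by (rewrite cstar_add, star1, Hskew; reflexivity).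
  assert (Q1 : (one ⊕ a) ⊗ q = one)
    by (unfold q; rewrite <- Hm, <- cstar_mul, H2; apply star1).
  assert (Q2 : q ⊗ (one ⊕ a) = one)
    by (unfold q; rewrite <- Hm, <- cstar_mul, H1; apply star1).
  assert (Hcomm : q ⊗ (one ⊖ a) = (one ⊖ a) ⊗ q).
  { rewrite mulrBr, mulrBl, cmul_1l, cmul_1r, (comm_inv a q Q1 Q2). reflexivity. }
  assert (Hstar : (cayley A a)^* = q ⊗ (one ⊖ a))
    by (unfold cayley; rewrite cstar_mul, Hp; reflexivity).
  split; rewrite Hstar, Hcomm; unfold cayley; fold p; rewrite cmul_assoc.
  - rewrite <- (cmul_assoc A (one ⊖ a) q), Q2, cmul_1r. exact H1.
  - rewrite <- (cmul_assoc A (one ⊕ a) p), H2, cmul_1r. exact Q1.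
Qed.

End Cayley.

Definition icayley (A : CStarAlg) (w : A) : A :=
  cone A ⊖ (inv A (cone A ⊕ w) ⊕ inv A (cone A ⊕ w)).

Section InverseCayley.
Context {A : CStarAlg}.
Local Notation one := (cone A).
Implicit Types x w : A.

Lemma invertible_rscale c x : c <> 0 -> invertible A x -> invertible A (c • x).
Proof.
  intros Hc [y [H1 H2]]. exists (/ c • y).
  rewrite !rscale_mull, !rscale_mulr, !rscale_mul, H1, H2, Rinv_r, Rinv_l by exact Hc.
  split; apply rscale1.
Qed.

Lemma inv_one_add w : N[w ⊖ one] <= 1/2 ->
  (one ⊕ w) ⊗ inv A (one ⊕ w) = one /\ inv A (one ⊕ w) ⊗ (one ⊕ w) = one /\
  N[inv A (one ⊕ w)] <= 2/3.
Proof.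
  intro Hw. set (a := (1/2) • (one ⊖ w)).
  assert (Ha : N[a] <= 1/4).
  { unfold a. rewrite normr_rscale, distrC, Rabs_pos_eq by lra. lra. }
  assert (E : one ⊕ w = 2 • (one ⊖ a)).
  { unfold a. rewrite rscaleBr, rscale_mul, Rmult_div_assoc, Rmult_1_r, Rdiv_diag, rscale1
      by lra.
    replace 2 with (1 + 1) by ring. rewrite rscaleDl, rscale1, addrKA, opprK. reflexivity. }
  assert (Hinv : invertible A (one ⊕ w)).
  { rewrite E. apply invertible_rscale; [lra|]. apply invertible_one_sub. lra. }
  destruct (inv_spec _ Hinv) as [H1 H2]. repeat split; [assumption | assumption|].
  assert (H3 : (2 • inv A (one ⊕ w)) ⊗ (one ⊖ a) = one).
  { rewrite rscale_mull, <- rscale_mulr, <- E. exact H2. }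
  apply norm_left_inv_le in H3. rewrite normr_rscale, Rabs_pos_eq in H3 by lra.
  pose proof (normr_ge0 (inv A (one ⊕ w))). pose proof (normr_ge0 a). nra.
Qed.

Lemma mul_inv_one_add w : N[w ⊖ one] <= 1/2 ->
  w ⊗ inv A (one ⊕ w) = one ⊖ inv A (one ⊕ w).
Proof.
  intro Hw. destruct (inv_one_add w Hw) as [H _].
  rewrite cmul_addl, cmul_1l in H. exact (addr_eq_swap _ _ _ H).
Qed.

Lemma icayleyE w : N[w ⊖ one] <= 1/2 -> icayley A w = (w ⊖ one) ⊗ inv A (one ⊕ w).
Proof.
  intro Hw. unfold icayley.
  rewrite mulrBl, cmul_1l, (mul_inv_one_add w Hw), opprD, cadd_assoc. reflexivity.
Qed.

Lemma norm_icayley w : N[w ⊖ one] <= 1/2 -> N[icayley A w] <= 2/3 * N[w ⊖ one].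
Proof.
  intro Hw. rewrite (icayleyE w Hw). eapply Rle_trans; [apply cnorm_submult|].
  destruct (inv_one_add w Hw) as [_ [_ HR]].
  pose proof (normr_ge0 (w ⊖ one)). nra.
Qed.

Lemma icayley_skew w : unitary A w -> N[w ⊖ one] <= 1/2 ->
  (icayley A w)^* = ⊖ icayley A w.
Proof.
  intros [Hw1 Hw2] Hw. destruct (inv_one_add w Hw) as [H1 [H2 _]].
  set (r := inv A (one ⊕ w)) in *.
  assert (Hcomm : w ⊗ r = r ⊗ w) by exact (comm_inv w r H1 H2).
  (* (one ⊕ w^* ) ⊗ w = one ⊕ w, so r ⊗ w inverts one ⊕ w^* = (one ⊕ w)^* *)
  assert (Hr : r^* = r ⊗ w).
  { apply (inv_uniq _ (one ⊕ w^*)).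
    - rewrite <- star1 at 1; rewrite <- cstar_add, <- cstar_mul, H1. apply star1.
    - rewrite cmul_addl, cmul_1l, <- Hcomm, cmul_assoc, Hw1, cmul_1l, Hcomm, cadd_comm.
      rewrite <- (cmul_1r A r) at 1. rewrite <- cmul_addr. exact H2. }
  rewrite (icayleyE w Hw); fold r. rewrite cstar_mul, cstar_add, starN, star1, Hr.
  rewrite <- cmul_assoc, mulrBr, Hw2, cmul_1r, <- opprB, mulrN.
  f_equal. rewrite mulrBr, mulrBl, cmul_1l, cmul_1r, Hcomm. reflexivity.
Qed.

Lemma cayleyK w : N[w ⊖ one] <= 1/2 -> cayley A (icayley A w) = w.
Proof.
  intro Hw. pose proof (norm_icayley w Hw).
  assert (Hk : N[icayley A w] <= 1/3) by (pose proof (normr_ge0 (w ⊖ one)); lra).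
  destruct (inv_one_sub _ Hk) as [H1 _].
  assert (E : one ⊕ icayley A w = w ⊗ (one ⊖ icayley A w)).
  { unfold icayley. rewrite subKr, cmul_addr, (mul_inv_one_add w Hw), cadd_assoc.
    apply subr_double. }
  unfold cayley. rewrite E, <- cmul_assoc, H1. apply cmul_1r.
Qed.

Lemma icayley_lipschitz w w' : N[w ⊖ one] <= 1/2 -> N[w' ⊖ one] <= 1/2 ->
  N[icayley A w ⊖ icayley A w'] <= 8/9 * N[w ⊖ w'].
Proof.
  intros Hw Hw'. destruct (inv_one_add w Hw) as [H1 [_ HR]].
  destruct (inv_one_add w' Hw') as [_ [H2' HR']].
  unfold icayley. rewrite subrBB, subr_double, (resolvent_eq _ _ _ _ H2' H1), addrKA.
  eapply Rle_trans; [apply normr_double|].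
  eapply Rle_trans; [apply Rmult_le_compat_l; [lra | apply normrM3]|].
  pose proof (normr_ge0 (inv A (one ⊕ w'))). pose proof (normr_ge0 (w ⊖ w')).
  assert (N[inv A (one ⊕ w')] * N[w ⊖ w'] <= 2/3 * N[w ⊖ w']) by nra.
  assert (0 <= N[inv A (one ⊕ w')] * N[w ⊖ w']) by nra.
  nra.
Qed.

End InverseCayley.

(** * Radial extension from the sphere *)

Definition radial_ext (A : CStarAlg) (n : nat) (g : (nat -> R) -> A) (y : nat -> R) : A :=
  enorm n y • g (normalize n y).

Section RadialExtension.
Context {A : CStarAlg} (n : nat) (g : (nat -> R) -> A).
Local Notation F := (radial_ext A n g).

Lemma radial_ext_sphere x : in_sphere n x -> F x = g x.
Proof.
  intro Hx. unfold radial_ext. rewrite (normalize_sphere_id n x Hx), enorm_sphere by exact Hx.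
  apply rscale1.
Qed.

Lemma radial_ext_origin y : enorm n y = 0 -> F y = czero A.
Proof. intro Hy. unfold radial_ext. rewrite Hy. apply rscale0. Qed.

Lemma norm_radial_ext M y : (forall x, in_sphere n x -> N[g x] <= M) ->
  N[F y] <= enorm n y * M.
Proof.
  intro HM. destruct (Req_dec (enorm n y) 0) as [Hy | Hy].
  - rewrite (radial_ext_origin y Hy), normr0, Hy. lra.
  - unfold radial_ext. rewrite normr_rscale, Rabs_pos_eq by apply enorm_ge0.
    apply Rmult_le_compat_l; [apply enorm_ge0 | apply HM, normalize_sphere, Hy].
Qed.

Lemma radial_ext_skew y : (forall x, in_sphere n x -> (g x)^* = ⊖ g x) -> (F y)^* = ⊖ F y.
Proof.
  intro Hg. destruct (Req_dec (enorm n y) 0) as [Hy | Hy].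
  - rewrite (radial_ext_origin y Hy), star0, oppr0. reflexivity.
  - unfold radial_ext. rewrite rscale_star, Hg by (apply normalize_sphere, Hy).
    apply rscaleN.
Qed.

Section Lipschitz.
Variables M L : R.
Hypotheses (HM : 0 <= M) (HL : 0 <= L).
Hypothesis (Hbound : forall x, in_sphere n x -> N[g x] <= M).
Hypothesis (Hlip : forall x x', in_sphere n x -> in_sphere n x' ->
                     N[g x ⊖ g x'] <= L * edist n x x').

Lemma radial_ext_lipschitz_origin y y' : enorm n y = 0 ->
  N[F y ⊖ F y'] <= M * edist n y y'.
Proof.
  intro Hy. rewrite (radial_ext_origin y Hy), cadd_0, normrN.
  eapply Rle_trans; [apply norm_radial_ext, Hbound|].
  pose proof (enorm_lipschitz n y y'). rewrite Hy, Rminus_0_l, Rabs_Ropp in H.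
  rewrite Rabs_pos_eq in H by apply enorm_ge0. nra.
Qed.

Lemma radial_ext_lipschitz y y' : N[F y ⊖ F y'] <= (M + 2 * L) * edist n y y'.
Proof.
  pose proof (edist_ge0 n y y').
  destruct (Req_dec (enorm n y) 0) as [Hy | Hy].
  { pose proof (radial_ext_lipschitz_origin y y' Hy). nra. }
  destruct (Req_dec (enorm n y') 0) as [Hy' | Hy'].
  { rewrite distrC, edist_sym. pose proof (radial_ext_lipschitz_origin y' y Hy').
    pose proof (edist_ge0 n y' y). nra. }
  unfold radial_ext. rewrite rscale_split.
  eapply Rle_trans; [apply cnorm_triangle|].
  rewrite !normr_rscale, (Rabs_pos_eq (enorm n y')) by apply enorm_ge0.
  assert (Hs : in_sphere n (normalize n y)) by (apply normalize_sphere, Hy).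
  assert (Hs' : in_sphere n (normalize n y')) by (apply normalize_sphere, Hy').
  pose proof (Hbound _ Hs). pose proof (Hlip _ _ Hs Hs').
  pose proof (enorm_lipschitz n y y'). pose proof (normalize_lipschitz n y y' Hy Hy').
  pose proof (Rabs_pos (enorm n y - enorm n y')). pose proof (enorm_ge0 n y').
  pose proof (normr_ge0 (g (normalize n y))).
  pose proof (normr_ge0 (g (normalize n y) ⊖ g (normalize n y'))).
  assert (Rabs (enorm n y - enorm n y') * N[g (normalize n y)] <= edist n y y' * M)
    by (apply Rmult_le_compat; assumption).
  assert (enorm n y' * N[g (normalize n y) ⊖ g (normalize n y')]
          <= L * (enorm n y' * edist n (normalize n y) (normalize n y'))) by nra.
  nra.
Qed.

End Lipschitz.
End RadialExtension.

Lemma unitary_extension_near_one (A : CStarAlg) (n : nat) (lam : R)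
    (beta : (nat -> R) -> A) :
  0 <= lam ->
  (forall x, in_sphere n x -> unitary A (beta x)) ->
  (forall x, in_sphere n x -> N[beta x ⊖ cone A] <= 1/2) ->
  (forall x, in_sphere n x -> N[beta x ⊖ cone A] <= 2 * lam) ->
  (forall x y, in_sphere n x -> in_sphere n y ->
     N[beta x ⊖ beta y] <= lam * edist n x y) ->
  exists alpha : (nat -> R) -> A,
    (forall y, in_disk n y -> unitary A (alpha y)) /\
    (forall x, in_sphere n x -> alpha x = beta x) /\
    (forall y y', in_disk n y -> in_disk n y' ->
       N[alpha y ⊖ alpha y'] <= 14 * lam * edist n y y').
Proof.
  intros Hlam Hunit Hnear Hnear_lam Hlip.
  set (g := fun x => icayley A (beta x)).
  assert (Hg_small : forall x, in_sphere n x -> N[g x] <= 1/3).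
  { intros x Hx. pose proof (norm_icayley _ (Hnear x Hx)). pose proof (Hnear x Hx).
    unfold g; cbv beta; lra. }
  assert (Hg_bound : forall x, in_sphere n x -> N[g x] <= 4/3 * lam).
  { intros x Hx. pose proof (norm_icayley _ (Hnear x Hx)). pose proof (Hnear_lam x Hx).
    unfold g; cbv beta; lra. }
  assert (Hg_lip : forall x x', in_sphere n x -> in_sphere n x' ->
            N[g x ⊖ g x'] <= 8/9 * lam * edist n x x').
  { intros x x' Hx Hx'. pose proof (Hlip x x' Hx Hx').
    pose proof (icayley_lipschitz _ _ (Hnear x Hx) (Hnear x' Hx')). unfold g; cbv beta; lra. }
  assert (HF_small : forall y, in_disk n y -> N[radial_ext A n g y] <= 1/3).
  { intros y Hy. pose proof (norm_radial_ext n g (1/3) y Hg_small).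
    pose proof (enorm_disk n y Hy). pose proof (enorm_ge0 n y). nra. }
  assert (HF_skew : forall y, (radial_ext A n g y)^* = ⊖ radial_ext A n g y).
  { intro y. apply radial_ext_skew. intros x Hx. apply icayley_skew; auto. }
  exists (fun y => cayley A (radial_ext A n g y)). split; [|split].
  - intros y Hy. apply cayley_unitary; auto.
  - intros x Hx. rewrite radial_ext_sphere by exact Hx. apply cayleyK, Hnear, Hx.
  - intros y y' Hy Hy'.
    eapply Rle_trans; [apply cayley_lipschitz; auto|].
    pose proof (radial_ext_lipschitz n g (4/3 * lam) (8/9 * lam)
                  ltac:(lra) ltac:(lra) Hg_bound Hg_lip y y').
    lra.
Qed.

Theorem mainTheorem6 :
  exists C : R, 0 < C /\
  forall (A : CStarAlg) (n : nat) (lam : R) (alpha0 : (nat -> R) -> A),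
    (1 <= n)%nat ->
    0 < lam ->
    (* alpha0 : S^{n-1} -> U(A) *)
    (forall x, in_sphere n x -> unitary A (alpha0 x)) ->
    (* alpha0 is lam-Lipschitz *)
    (forall x y, in_sphere n x -> in_sphere n y ->
       cdist A (alpha0 x) (alpha0 y) <= lam * edist n x y) ->
    (* diam alpha0(S^{n-1}) <= 1/2 *)
    (forall x y, in_sphere n x -> in_sphere n y ->
       cdist A (alpha0 x) (alpha0 y) <= 1 / 2) ->
    exists alpha : (nat -> R) -> A,
      (forall x, in_disk n x -> unitary A (alpha x)) /\
      (forall x, in_sphere n x -> alpha x = alpha0 x) /\
      (forall x y, in_disk n x -> in_disk n y ->
         cdist A (alpha x) (alpha y) <= C * lam * edist n x y).
Proof.
  exists 14. split; [lra|].
  intros A n lam alpha0 Hn Hlam Hunit Hlip Hdiam. unfold cdist in *.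
  set (u0 := alpha0 e0).
  assert (Hu0 : unitary A u0) by (apply Hunit, e0_sphere, Hn).
  pose proof (unitary_star _ Hu0) as Hu0_star.
  assert (Hnear : forall x, N[u0^* ⊗ alpha0 x ⊖ cone A] <= N[alpha0 x ⊖ u0]).
  { intro x. destruct Hu0 as [H _]. rewrite <- H. apply unitary_dist_mull, Hu0_star. }
  destruct (unitary_extension_near_one A n lam (fun x => u0^* ⊗ alpha0 x))
    as [beta [Hbeta_unit [Hbeta_ext Hbeta_lip]]].
  - lra.
  - intros x Hx. apply unitary_mul; auto.
  - intros x Hx. eapply Rle_trans; [apply Hnear | apply Hdiam, e0_sphere; auto].
  - intros x Hx. eapply Rle_trans; [apply Hnear|].
    eapply Rle_trans; [apply Hlip; [exact Hx | apply e0_sphere, Hn]|].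
    pose proof (sphere_diam n x e0 Hx (e0_sphere n Hn)). nra.
  - intros x y Hx Hy. eapply Rle_trans; [apply unitary_dist_mull, Hu0_star | auto].
  - exists (fun y => u0 ⊗ beta y). split; [|split].
    + intros y Hy. apply unitary_mul; auto.
    + intros x Hx. rewrite Hbeta_ext by exact Hx. apply unitary_mulKV, Hu0.
    + intros y y' Hy Hy'. eapply Rle_trans; [apply unitary_dist_mull, Hu0 | auto].
Qed.
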